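(* Let $\mathbb{C}$ be an abelian category. Then: (i) every object $X$ satisfies: if $\kappa:X\to A$ is the kernel of a split epimorphism which is also a normal epimorphism, then $\kappa$ is a split monomorphism; (ii) every object is proto-complete; (iii) an object is complete if and only if it is (regular) injective; (iv) an object is strong-complete if and only if it is a zero object. More generally, (i), (iii) (with ''regular injective'', i.e. injective with respect to regular monomorphisms) and (iv) hold whenever $\mathbb{C}$ is a category whose opposite $\mathbb{C}^{\mathrm{op}}$ is semi-abelian.
   Context: A normal monomorphism (epimorphism) is a kernel (cokernel) of some morphism; a protosplit monomorphism is a kernel of a split epimorphism. An object $X$ of a pointed category is proto-complete if every protosplit monomorphism with domain $X$ is a split monomorphism; complete if every normal monomorphism with domain $X$ is a split monomorphism; strong-complete if every protosplit monomorphism with domain $X$ is a split monomorphism with a unique retraction. A category is semi-abelian if it is pointed, Barr-exact, protomodular (split short five lemma holds) and has binary coproducts. *)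

Set Implicit Arguments.
Unset Strict Implicit.

Record Category : Type := {
  Ob :> Type;
  Hom : Ob -> Ob -> Type;
  idm : forall X : Ob, Hom X X;
  comp : forall X Y Z : Ob, Hom Y Z -> Hom X Y -> Hom X Z;
  comp_assoc : forall (W X Y Z : Ob) (h : Hom Y Z) (g : Hom X Y) (f : Hom W X),
      comp h (comp g f) = comp (comp h g) f;
  comp_id_l : forall (X Y : Ob) (f : Hom X Y), comp (idm Y) f = f;
  comp_id_r : forall (X Y : Ob) (f : Hom X Y), comp f (idm X) = f
}.

Arguments Hom {c} _ _.
Arguments idm {c} _.
Arguments comp {c X Y Z} _ _.

Notation "g ∘ f" := (comp g f) (at level 40, left associativity).

Definition op (C : Category) : Category :=
  {| Ob := Ob C;
     Hom := fun X Y => @Hom C Y X;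
     idm := fun X => @idm C X;
     comp := fun X Y Z (g : @Hom C Z Y) (f : @Hom C Y X) => f ∘ g;
     comp_assoc := fun W X Y Z h g f => eq_sym (@comp_assoc C _ _ _ _ f g h);
     comp_id_l := fun X Y f => @comp_id_r C _ _ f;
     comp_id_r := fun X Y f => @comp_id_l C _ _ f |}.

Definition is_mono {C : Category} {X Y : C} (m : Hom X Y) : Prop :=
  forall (T : C) (a b : Hom T X), m ∘ a = m ∘ b -> a = b.

Definition is_epi {C : Category} {X Y : C} (e : Hom X Y) : Prop :=
  forall (T : C) (a b : Hom Y T), a ∘ e = b ∘ e -> a = b.

Definition is_iso {C : Category} {X Y : C} (f : Hom X Y) : Prop :=
  exists g : Hom Y X, g ∘ f = idm X /\ f ∘ g = idm Y.

Definition is_retraction {C : Category} {X Y : C} (m : Hom X Y) (r : Hom Y X) : Prop :=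
  r ∘ m = idm X.

Definition is_split_mono {C : Category} {X Y : C} (m : Hom X Y) : Prop :=
  exists r : Hom Y X, is_retraction m r.

Definition is_split_epi {C : Category} {X Y : C} (p : Hom X Y) : Prop :=
  exists s : Hom Y X, p ∘ s = idm Y.

Definition is_initial {C : Category} (I : C) : Prop :=
  forall X : C, exists f : Hom I X, forall g : Hom I X, g = f.

Definition is_terminal {C : Category} (T : C) : Prop :=
  forall X : C, exists f : Hom X T, forall g : Hom X T, g = f.

Definition is_zero_object {C : Category} (Z : C) : Prop :=
  is_initial Z /\ is_terminal Z.

Definition pointed (C : Category) : Prop := exists Z : C, is_zero_object Z.

Definition is_zero_morphism {C : Category} {X Y : C} (f : Hom X Y) : Prop :=
  exists (Z : C) (a : Hom X Z) (b : Hom Z Y), is_zero_object Z /\ f = b ∘ a.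

Definition is_kernel {C : Category} {K X Y : C} (k : Hom K X) (f : Hom X Y) : Prop :=
  is_zero_morphism (f ∘ k) /\
  forall (T : C) (g : Hom T X), is_zero_morphism (f ∘ g) ->
    exists h : Hom T K, k ∘ h = g /\ forall h' : Hom T K, k ∘ h' = g -> h' = h.

Definition is_cokernel {C : Category} {X Y Q : C} (q : Hom Y Q) (f : Hom X Y) : Prop :=
  is_zero_morphism (q ∘ f) /\
  forall (T : C) (g : Hom Y T), is_zero_morphism (g ∘ f) ->
    exists h : Hom Q T, h ∘ q = g /\ forall h' : Hom Q T, h' ∘ q = g -> h' = h.

Definition is_normal_mono {C : Category} {X A : C} (m : Hom X A) : Prop :=
  exists (B : C) (f : Hom A B), is_kernel m f.

Definition is_normal_epi {C : Category} {A B : C} (e : Hom A B) : Prop :=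
  exists (X : C) (f : Hom X A), is_cokernel e f.

Definition is_protosplit_mono {C : Category} {X A : C} (m : Hom X A) : Prop :=
  exists (B : C) (p : Hom A B), is_split_epi p /\ is_kernel m p.

Definition proto_complete {C : Category} (X : C) : Prop :=
  forall (A : C) (k : Hom X A), is_protosplit_mono k -> is_split_mono k.

Definition complete {C : Category} (X : C) : Prop :=
  forall (A : C) (k : Hom X A), is_normal_mono k -> is_split_mono k.

Definition strong_complete {C : Category} (X : C) : Prop :=
  forall (A : C) (k : Hom X A), is_protosplit_mono k ->
    exists r : Hom A X, is_retraction k r /\
      forall r' : Hom A X, is_retraction k r' -> r' = r.

Definition is_equalizer {C : Category} {E X Y : C} (e : Hom E X) (f g : Hom X Y) : Prop :=
  f ∘ e = g ∘ e /\
  forall (T : C) (h : Hom T X), f ∘ h = g ∘ h ->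
    exists u : Hom T E, e ∘ u = h /\ forall u' : Hom T E, e ∘ u' = h -> u' = u.

Definition is_coequalizer {C : Category} {X Y Q : C} (q : Hom Y Q) (f g : Hom X Y) : Prop :=
  q ∘ f = q ∘ g /\
  forall (T : C) (h : Hom Y T), h ∘ f = h ∘ g ->
    exists u : Hom Q T, u ∘ q = h /\ forall u' : Hom Q T, u' ∘ q = h -> u' = u.

Definition is_regular_mono {C : Category} {X Y : C} (m : Hom X Y) : Prop :=
  exists (Z : C) (f g : Hom Y Z), is_equalizer m f g.

Definition is_regular_epi {C : Category} {X Y : C} (e : Hom X Y) : Prop :=
  exists (W : C) (f g : Hom W X), is_coequalizer e f g.

Definition injective {C : Category} (X : C) : Prop :=
  forall (A B : C) (m : Hom A B) (f : Hom A X), is_mono m ->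
    exists g : Hom B X, g ∘ m = f.

Definition regular_injective {C : Category} (X : C) : Prop :=
  forall (A B : C) (m : Hom A B) (f : Hom A X), is_regular_mono m ->
    exists g : Hom B X, g ∘ m = f.

Definition is_product {C : Category} {P X Y : C} (p1 : Hom P X) (p2 : Hom P Y) : Prop :=
  forall (T : C) (f : Hom T X) (g : Hom T Y),
    exists u : Hom T P, (p1 ∘ u = f /\ p2 ∘ u = g) /\
      forall u' : Hom T P, p1 ∘ u' = f /\ p2 ∘ u' = g -> u' = u.

Definition is_coproduct {C : Category} {X Y S : C} (i1 : Hom X S) (i2 : Hom Y S) : Prop :=
  forall (T : C) (f : Hom X T) (g : Hom Y T),
    exists u : Hom S T, (u ∘ i1 = f /\ u ∘ i2 = g) /\
      forall u' : Hom S T, u' ∘ i1 = f /\ u' ∘ i2 = g -> u' = u.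

Definition has_binary_products (C : Category) : Prop :=
  forall X Y : C, exists (P : C) (p1 : Hom P X) (p2 : Hom P Y), is_product p1 p2.

Definition has_binary_coproducts (C : Category) : Prop :=
  forall X Y : C, exists (S : C) (i1 : Hom X S) (i2 : Hom Y S), is_coproduct i1 i2.

Definition is_pullback {C : Category} {P X Y Z : C}
    (a : Hom P X) (b : Hom P Y) (f : Hom X Z) (g : Hom Y Z) : Prop :=
  f ∘ a = g ∘ b /\
  forall (T : C) (x : Hom T X) (y : Hom T Y), f ∘ x = g ∘ y ->
    exists u : Hom T P, (a ∘ u = x /\ b ∘ u = y) /\
      forall u' : Hom T P, a ∘ u' = x /\ b ∘ u' = y -> u' = u.

Definition has_pullbacks (C : Category) : Prop :=
  forall (X Y Z : C) (f : Hom X Z) (g : Hom Y Z),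
    exists (P : C) (a : Hom P X) (b : Hom P Y), is_pullback a b f g.

Definition has_terminal (C : Category) : Prop := exists T : C, is_terminal T.

Definition finitely_complete (C : Category) : Prop :=
  has_terminal C /\ has_pullbacks C.

Definition is_kernel_pair {C : Category} {R X Y : C} (d0 d1 : Hom R X) (f : Hom X Y) : Prop :=
  is_pullback d0 d1 f f.

Definition has_kernels (C : Category) : Prop :=
  forall (X Y : C) (f : Hom X Y), exists (K : C) (k : Hom K X), is_kernel k f.

Definition has_cokernels (C : Category) : Prop :=
  forall (X Y : C) (f : Hom X Y), exists (Q : C) (q : Hom Y Q), is_cokernel q f.

(* Abelian category (Freyd's definition): a category with a zero object,
   binary products and coproducts, kernels and cokernels, in which every
   monomorphism is normal and every epimorphism is normal. *)
Definition abelian (C : Category) : Prop :=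
  pointed C /\ has_binary_products C /\ has_binary_coproducts C /\
  has_kernels C /\ has_cokernels C /\
  (forall (X Y : C) (m : Hom X Y), is_mono m -> is_normal_mono m) /\
  (forall (X Y : C) (e : Hom X Y), is_epi e -> is_normal_epi e).

Definition regular (C : Category) : Prop :=
  finitely_complete C /\
  (forall (R X Y : C) (d0 d1 : Hom R X) (f : Hom X Y), is_kernel_pair d0 d1 f ->
     exists (Q : C) (q : Hom X Q), is_coequalizer q d0 d1) /\
  (forall (P X Y Z : C) (a : Hom P X) (b : Hom P Y) (f : Hom X Z) (g : Hom Y Z),
     is_pullback a b f g -> is_regular_epi f -> is_regular_epi b).

(* Internal equivalence relation on X: a jointly monic pair d0, d1 : R ⇉ X
   whose induced relation on generalized elements T -> X is, for every T,
   reflexive, symmetric and transitive. *)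
Definition rel_of {C : Category} {R X : C} (d0 d1 : Hom R X) (T : C)
    (x y : Hom T X) : Prop :=
  exists r : Hom T R, d0 ∘ r = x /\ d1 ∘ r = y.

Definition is_internal_equivalence {C : Category} {R X : C} (d0 d1 : Hom R X) : Prop :=
  (forall (T : C) (r r' : Hom T R), d0 ∘ r = d0 ∘ r' -> d1 ∘ r = d1 ∘ r' -> r = r') /\
  (forall (T : C) (x : Hom T X), rel_of d0 d1 x x) /\
  (forall (T : C) (x y : Hom T X), rel_of d0 d1 x y -> rel_of d0 d1 y x) /\
  (forall (T : C) (x y z : Hom T X),
     rel_of d0 d1 x y -> rel_of d0 d1 y z -> rel_of d0 d1 x z).

Definition barr_exact (C : Category) : Prop :=
  regular C /\
  forall (R X : C) (d0 d1 : Hom R X), is_internal_equivalence d0 d1 ->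
    exists (Y : C) (f : Hom X Y), is_kernel_pair d0 d1 f.

(* Protomodularity for a pointed finitely complete category: the split short
   five lemma. *)
Definition protomodular (C : Category) : Prop :=
  forall (K A B K' A' B' : C)
    (k : Hom K A) (p : Hom A B) (s : Hom B A)
    (k' : Hom K' A') (p' : Hom A' B') (s' : Hom B' A')
    (u : Hom K K') (v : Hom A A') (w : Hom B B'),
    is_kernel k p -> p ∘ s = idm B ->
    is_kernel k' p' -> p' ∘ s' = idm B' ->
    v ∘ k = k' ∘ u -> p' ∘ v = w ∘ p -> v ∘ s = s' ∘ w ->
    is_iso u -> is_iso w -> is_iso v.

Definition semi_abelian (C : Category) : Prop :=
  pointed C /\ barr_exact C /\ protomodular C /\ has_binary_coproducts C.

(* Let D be the opposite of C; it is pointed protomodular both when C is abelian and when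
   op C is semi-abelian.  Dually, (i) asks that the cokernel q of a split normal monomorphism m
   with retraction r split.  With k the kernel of r, (k, m) is a split extension, so q ∘ k has
   trivial kernel and is monic; the pullback of q along q ∘ k is a subobject containing k and m,
   hence an isomorphism, so q factors through q ∘ k, and this makes q split.  In an abelian
   category every epimorphism is normal, so (ii) is a special case of (i).
   For (iv), the first projection X × X → X of D is the cokernel of the split monomorphism
   ⟨0, 1⟩, and its sections ⟨1, g⟩ are indexed by the endomorphisms g of X; uniqueness forces
   1 = 0.
   For (iii) with op C semi-abelian, regular epimorphisms of D are normal and stable under
   pullback, so normal epimorphisms onto X split exactly when X is regular projective.  For C
   abelian, push a monomorphism A → B out along f : A → X; the pushout leg out of X is again a
   monomorphism, hence normal, so it has a retraction, which extends f along A → B. *)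

Set Implicit Arguments.
Unset Strict Implicit.

Lemma hom_to_zero_object_eq {C : Category} {Z X : C} (HZ : is_zero_object Z) (a b : Hom X Z) :
  a = b.
Proof. destruct (proj2 HZ X) as [f Hf]. rewrite (Hf a), (Hf b). reflexivity. Qed.

Lemma hom_from_zero_object_eq {C : Category} {Z X : C} (HZ : is_zero_object Z) (a b : Hom Z X) :
  a = b.
Proof. destruct (proj1 HZ X) as [f Hf]. rewrite (Hf a), (Hf b). reflexivity. Qed.

Lemma zero_morphism_unique {C : Category} {X Y : C} (f g : Hom X Y) :
  is_zero_morphism f -> is_zero_morphism g -> f = g.
Proof.
  intros [Z [a [b [HZ ->]]]] [Z' [a' [b' [HZ' ->]]]].
  destruct (proj1 HZ Z') as [c _].
  rewrite (hom_to_zero_object_eq HZ' a' (c ∘ a)), (hom_from_zero_object_eq HZ b (b' ∘ c)).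
  symmetry. apply comp_assoc.
Qed.

Lemma zero_morphism_comp_l {C : Category} {X Y W : C} (g : Hom Y W) (f : Hom X Y) :
  is_zero_morphism f -> is_zero_morphism (g ∘ f).
Proof. intros [Z [a [b [HZ ->]]]]. exists Z, a, (g ∘ b). split; [exact HZ | apply comp_assoc]. Qed.

Lemma zero_morphism_comp_r {C : Category} {X Y W : C} (f : Hom Y W) (g : Hom X Y) :
  is_zero_morphism f -> is_zero_morphism (f ∘ g).
Proof.
  intros [Z [a [b [HZ ->]]]]. exists Z, (a ∘ g), b. split; [exact HZ | symmetry; apply comp_assoc].
Qed.

Lemma zero_morphism_exists {C : Category} (HP : pointed C) (X Y : C) :
  exists f : Hom X Y, is_zero_morphism f.
Proof.
  destruct HP as [Z HZ]. destruct (proj2 HZ X) as [a _]. destruct (proj1 HZ Y) as [b _].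
  exists (b ∘ a), Z, a, b. auto.
Qed.

Lemma zero_object_of_zero_id {C : Category} {X : C} :
  is_zero_morphism (idm X) -> is_zero_object X.
Proof.
  intros [Z [a [b [HZ Hid]]]]. split.
  - intros Y. destruct (proj1 HZ Y) as [h Hh]. exists (h ∘ a). intros g.
    rewrite <- (comp_id_r g), Hid, comp_assoc. f_equal. apply Hh.
  - intros Y. destruct (proj2 HZ Y) as [h Hh]. exists (b ∘ h). intros g.
    rewrite <- (comp_id_l g), Hid, <- comp_assoc. f_equal. apply Hh.
Qed.

Lemma zero_morphism_mono_cancel {C : Category} {X Y T : C} (m : Hom X Y) (x : Hom T X) :
  is_mono m -> is_zero_morphism (m ∘ x) -> is_zero_morphism x.
Proof.
  intros Hm [Z [a [b [HZ E]]]]. destruct (proj1 HZ X) as [c _].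
  assert (x = c ∘ a) as ->.
  { apply Hm. rewrite E, comp_assoc. f_equal. apply (hom_from_zero_object_eq HZ). }
  exists Z, a, c. auto.
Qed.

Lemma mono_of_retraction {C : Category} {X Y : C} (m : Hom X Y) (r : Hom Y X) :
  r ∘ m = idm X -> is_mono m.
Proof.
  intros H T a b Hab. rewrite <- (comp_id_l a), <- (comp_id_l b), <- H, <- !comp_assoc, Hab.
  reflexivity.
Qed.

Lemma epi_of_section {C : Category} {X Y : C} (p : Hom X Y) (s : Hom Y X) :
  p ∘ s = idm Y -> is_epi p.
Proof.
  intros H T a b Hab. rewrite <- (comp_id_r a), <- (comp_id_r b), <- H, !comp_assoc, Hab.
  reflexivity.
Qed.

Lemma kernel_mono {C : Category} {K X Y : C} (k : Hom K X) (f : Hom X Y) :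
  is_kernel k f -> is_mono k.
Proof.
  intros [Hz Hu] T a b Hab.
  destruct (Hu T (k ∘ a)) as [h [_ Hh]].
  { rewrite comp_assoc. apply zero_morphism_comp_r, Hz. }
  rewrite (Hh a eq_refl), (Hh b (eq_sym Hab)). reflexivity.
Qed.

Lemma cokernel_epi {C : Category} {X Y Q : C} (q : Hom Y Q) (f : Hom X Y) :
  is_cokernel q f -> is_epi q.
Proof.
  intros [Hz Hu] T a b Hab.
  destruct (Hu T (a ∘ q)) as [h [_ Hh]].
  { rewrite <- comp_assoc. apply zero_morphism_comp_l, Hz. }
  rewrite (Hh a eq_refl), (Hh b (eq_sym Hab)). reflexivity.
Qed.

Lemma normal_epi_cokernel_of_kernel {C : Category} {X A B K : C}
    (e : Hom A B) (f : Hom X A) (k : Hom K A) :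
  is_cokernel e f -> is_kernel k e -> is_cokernel e k.
Proof.
  intros [Hf Hfu] [Hk Hku]. split; [exact Hk |].
  intros T g Hg. apply Hfu.
  destruct (Hku X f Hf) as [h [Hh _]]. rewrite <- Hh, comp_assoc. apply zero_morphism_comp_r, Hg.
Qed.

Lemma normal_mono_kernel_of_cokernel {C : Category} {X A B Q : C}
    (m : Hom X A) (f : Hom A B) (q : Hom A Q) :
  is_kernel m f -> is_cokernel q m -> is_kernel m q.
Proof.
  intros [Hf Hfu] [Hq Hqu]. split; [exact Hq |].
  intros T g Hg. apply Hfu.
  destruct (Hqu B f Hf) as [h [Hh _]]. rewrite <- Hh, <- comp_assoc. apply zero_morphism_comp_l, Hg.
Qed.

Lemma product_pairing {C : Category} {P X Y : C} {p1 : Hom P X} {p2 : Hom P Y}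
    (Hp : is_product p1 p2) {T : C} (f : Hom T X) (g : Hom T Y) :
  exists u, p1 ∘ u = f /\ p2 ∘ u = g.
Proof. destruct (Hp T f g) as [u [Hu _]]. exists u. exact Hu. Qed.

Lemma product_hom_ext {C : Category} {P X Y : C} {p1 : Hom P X} {p2 : Hom P Y}
    (Hp : is_product p1 p2) {T : C} (u v : Hom T P) :
  p1 ∘ u = p1 ∘ v -> p2 ∘ u = p2 ∘ v -> u = v.
Proof.
  intros H1 H2. destruct (Hp T (p1 ∘ v) (p2 ∘ v)) as [w [_ Hw]].
  rewrite (Hw u (conj H1 H2)), (Hw v (conj eq_refl eq_refl)). reflexivity.
Qed.

Lemma coproduct_copairing {C : Category} {X Y S : C} {i1 : Hom X S} {i2 : Hom Y S}
    (Hs : is_coproduct i1 i2) {T : C} (f : Hom X T) (g : Hom Y T) :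
  exists u, u ∘ i1 = f /\ u ∘ i2 = g.
Proof. destruct (Hs T f g) as [u [Hu _]]. exists u. exact Hu. Qed.

Lemma coproduct_hom_ext {C : Category} {X Y S : C} {i1 : Hom X S} {i2 : Hom Y S}
    (Hs : is_coproduct i1 i2) {T : C} (u v : Hom S T) :
  u ∘ i1 = v ∘ i1 -> u ∘ i2 = v ∘ i2 -> u = v.
Proof.
  intros H1 H2. destruct (Hs T (v ∘ i1) (v ∘ i2)) as [w [_ Hw]].
  rewrite (Hw u (conj H1 H2)), (Hw v (conj eq_refl eq_refl)). reflexivity.
Qed.

Lemma product_injection_kernel {C : Category} {P X Y : C} {p1 : Hom P X} {p2 : Hom P Y}
    (Hp : is_product p1 p2) (i2 : Hom Y P) :
  is_zero_morphism (p1 ∘ i2) -> p2 ∘ i2 = idm Y -> is_kernel i2 p1.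
Proof.
  intros Hz Hi. split; [exact Hz |].
  intros T g Hg. exists (p2 ∘ g). split.
  - apply (product_hom_ext Hp); rewrite comp_assoc.
    + apply zero_morphism_unique; [apply zero_morphism_comp_r, Hz | exact Hg].
    + rewrite Hi, comp_id_l. reflexivity.
  - intros h Hh. rewrite <- Hh, comp_assoc, Hi, comp_id_l. reflexivity.
Qed.

Lemma coproduct_injection_cokernel {C : Category} {X Y S : C} {i1 : Hom X S} {i2 : Hom Y S}
    (Hs : is_coproduct i1 i2) (a : Hom S Y) :
  is_zero_morphism (a ∘ i1) -> a ∘ i2 = idm Y -> is_cokernel a i1.
Proof.
  intros Hz Ha. split; [exact Hz |].
  intros T g Hg. exists (g ∘ i2). split.
  - apply (coproduct_hom_ext Hs); rewrite <- comp_assoc.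
    + apply zero_morphism_unique; [apply zero_morphism_comp_l, Hz | exact Hg].
    + rewrite Ha, comp_id_r. reflexivity.
  - intros h Hh. rewrite <- Hh, <- comp_assoc, Ha, comp_id_r. reflexivity.
Qed.

Lemma pullback_mono {C : Category} {P X Y Z : C}
    (a : Hom P X) (b : Hom P Y) (f : Hom X Z) (g : Hom Y Z) :
  is_pullback a b f g -> is_mono g -> is_mono a.
Proof.
  intros [Hc Hu] Hg T x y Hxy.
  destruct (Hu T (a ∘ y) (b ∘ y)) as [w [_ Hw]]. { rewrite !comp_assoc, Hc. reflexivity. }
  rewrite (Hw y (conj eq_refl eq_refl)). apply Hw. split; [exact Hxy |].
  apply Hg. rewrite !comp_assoc, <- Hc, <- !comp_assoc, Hxy. reflexivity.
Qed.

Lemma zero_object_op {C : Category} (Z : C) : @is_zero_object (op C) Z <-> is_zero_object Z.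
Proof. unfold is_zero_object, is_initial, is_terminal; cbn. tauto. Qed.

Lemma zero_morphism_op {C : Category} {X Y : C} (f : Hom Y X) :
  @is_zero_morphism (op C) X Y f <-> is_zero_morphism f.
Proof.
  split; intros [Z [a [b [HZ E]]]]; exists Z, b, a; split; try exact E; apply zero_object_op, HZ.
Qed.

Lemma kernel_op {C : Category} {K X Y : C} (k : Hom X K) (f : Hom Y X) :
  @is_kernel (op C) K X Y k f <-> is_cokernel k f.
Proof.
  split; intros [Hz Hu]; split.
  - apply zero_morphism_op, Hz.
  - intros T g Hg. apply Hu, zero_morphism_op, Hg.
  - apply zero_morphism_op, Hz.
  - intros T g Hg. apply Hu, zero_morphism_op, Hg.
Qed.

Lemma cokernel_op {C : Category} {X Y Q : C} (q : Hom Q Y) (f : Hom Y X) :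
  @is_cokernel (op C) X Y Q q f <-> is_kernel q f.
Proof.
  split; intros [Hz Hu]; split.
  - apply zero_morphism_op, Hz.
  - intros T g Hg. apply Hu, zero_morphism_op, Hg.
  - apply zero_morphism_op, Hz.
  - intros T g Hg. apply Hu, zero_morphism_op, Hg.
Qed.

Lemma normal_epi_op {C : Category} {X Y : C} (m : Hom X Y) :
  @is_normal_epi (op C) Y X m <-> is_normal_mono m.
Proof. split; intros [B [f Hf]]; exists B, f; apply cokernel_op, Hf. Qed.

Lemma normal_mono_op {C : Category} {X Y : C} (e : Hom X Y) :
  @is_normal_mono (op C) Y X e <-> is_normal_epi e.
Proof. split; intros [B [f Hf]]; exists B, f; apply kernel_op, Hf. Qed.

Lemma abelian_op {C : Category} : abelian C -> abelian (op C).
Proof.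
  intros [[Z HZ] [HPr [HCo [HK [HCK [HMn HEn]]]]]].
  split; [exists Z; apply zero_object_op, HZ |].
  split; [exact HCo |]. split; [exact HPr |].
  split; [intros X Y f; destruct (HCK Y X f) as [Q [q Hq]]; exists Q, q; apply kernel_op, Hq |].
  split; [intros X Y f; destruct (HK Y X f) as [K [k Hk]]; exists K, k; apply cokernel_op, Hk |].
  split; intros X Y f Hf; [apply normal_mono_op, HEn | apply normal_epi_op, HMn]; exact Hf.
Qed.

Definition jointly_epic {C : Category} {K B A : C} (k : Hom K A) (s : Hom B A) : Prop :=
  forall (T : C) (u v : Hom A T), u ∘ k = v ∘ k -> u ∘ s = v ∘ s -> u = v.

Definition jointly_extremal_epic {C : Category} {K B A : C} (k : Hom K A) (s : Hom B A) : Prop :=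
  forall (E : C) (e : Hom E A) (k' : Hom K E) (s' : Hom B E),
    is_mono e -> e ∘ k' = k -> e ∘ s' = s -> is_iso e.

Definition split_extensions_jointly_extremal_epic (C : Category) : Prop :=
  forall (K A B : C) (k : Hom K A) (p : Hom A B) (s : Hom B A),
    is_kernel k p -> p ∘ s = idm B -> jointly_extremal_epic k s.

(* Bourn's characterisation of protomodularity for pointed categories with finite limits. *)
Definition pointed_protomodular (C : Category) : Prop :=
  pointed C /\ has_pullbacks C /\ split_extensions_jointly_extremal_epic C.

Definition pullback_stable_regular_epis (C : Category) : Prop :=
  forall (P X Y Z : C) (a : Hom P X) (b : Hom P Y) (f : Hom X Z) (g : Hom Y Z),
    is_pullback a b f g -> is_regular_epi f -> is_regular_epi b.

Lemma protomodular_split_extensions {C : Category} :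
  protomodular C -> split_extensions_jointly_extremal_epic C.
Proof.
  intros Hpm K A B k p s Hk Hps E e k' s' He Hek Hes.
  assert (Hk' : is_kernel k' (p ∘ e)).
  { split.
    - rewrite <- comp_assoc, Hek. exact (proj1 Hk).
    - intros T g Hg. destruct (proj2 Hk T (e ∘ g)) as [h [Hh Hu]].
      { rewrite comp_assoc. exact Hg. }
      exists h. split.
      + apply He. rewrite comp_assoc, Hek. exact Hh.
      + intros h' Hh'. apply Hu. rewrite <- Hh', comp_assoc, Hek. reflexivity. }
  apply (Hpm K E B K A B k' (p ∘ e) s' k p s (idm K) e (idm B) Hk').
  - rewrite <- comp_assoc, Hes. exact Hps.
  - exact Hk.
  - exact Hps.
  - rewrite comp_id_r. exact Hek.
  - rewrite comp_id_l. reflexivity.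
  - rewrite comp_id_r. exact Hes.
  - exists (idm K). split; apply comp_id_l.
  - exists (idm B). split; apply comp_id_l.
Qed.

Lemma semi_abelian_pointed_protomodular {C : Category} :
  semi_abelian C -> pointed_protomodular C.
Proof.
  intros [HP [[[[_ HPb] _] _] [Hpm _]]].
  split; [exact HP | split; [exact HPb | apply protomodular_split_extensions, Hpm]].
Qed.

Lemma zero_of_unique_projection_section {C : Category} (HP : pointed C) {P X : C}
    {p1 p2 : Hom P X} (Hp : is_product p1 p2) :
  (forall s s' : Hom X P, p1 ∘ s = idm X -> p1 ∘ s' = idm X -> s = s') -> is_zero_object X.
Proof.
  intros Hu. destruct (zero_morphism_exists HP X X) as [z Hz].
  destruct (product_pairing Hp (idm X) z) as [i [Hi1 Hi2]].
  destruct (product_pairing Hp (idm X) (idm X)) as [d [Hd1 Hd2]].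
  apply zero_object_of_zero_id. rewrite <- Hd2, <- (Hu i d Hi1 Hd1), Hi2. exact Hz.
Qed.

Section PointedProtomodular.

Variable C : Category.
Hypothesis HP : pointed C.
Hypothesis HPb : has_pullbacks C.
Hypothesis HJ : split_extensions_jointly_extremal_epic C.

Lemma has_kernels_of_pullbacks : has_kernels C.
Proof.
  intros X Y f. destruct HP as [Z HZ]. destruct (proj1 HZ Y) as [z _].
  destruct (HPb f z) as [P [a [b [Hc Hpb]]]].
  exists P, a. split.
  - rewrite Hc. exists Z, b, z. auto.
  - intros T g Hg. destruct (proj2 HZ T) as [t _].
    destruct (Hpb T g t) as [u [[Hu _] Huniq]].
    { apply zero_morphism_unique; [exact Hg | exists Z, t, z; auto]. }
    exists u. split; [exact Hu |].
    intros h Hh. apply Huniq. split; [exact Hh | apply (hom_to_zero_object_eq HZ)].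
Qed.

Lemma has_binary_products_of_pullbacks : has_binary_products C.
Proof.
  intros X Y. destruct HP as [Z HZ].
  destruct (proj2 HZ X) as [tx _]. destruct (proj2 HZ Y) as [ty _].
  destruct (HPb tx ty) as [P [a [b [_ Hpb]]]].
  exists P, a, b. intros T f g. exact (Hpb T f g (hom_to_zero_object_eq HZ _ _)).
Qed.

Lemma equalizer_exists {A T : C} (u v : Hom A T) : exists (E : C) (e : Hom E A), is_equalizer e u v.
Proof.
  destruct (has_binary_products_of_pullbacks T T) as [P [p1 [p2 Hp]]].
  destruct (product_pairing Hp (idm T) (idm T)) as [d [Hd1 Hd2]].
  destruct (product_pairing Hp u v) as [uv [Huv1 Huv2]].
  destruct (HPb uv d) as [E [e [t [Hc Hpb]]]].
  assert (Hu : u ∘ e = t). { rewrite <- Huv1, <- comp_assoc, Hc, comp_assoc, Hd1. apply comp_id_l. }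
  assert (Hv : v ∘ e = t). { rewrite <- Huv2, <- comp_assoc, Hc, comp_assoc, Hd2. apply comp_id_l. }
  exists E, e. split; [congruence |].
  intros W h Hh. destruct (Hpb W h (u ∘ h)) as [w [[Hw _] Huniq]].
  { apply (product_hom_ext Hp); rewrite !comp_assoc.
    - rewrite Huv1, Hd1, comp_id_l. reflexivity.
    - rewrite Huv2, Hd2, comp_id_l. exact (eq_sym Hh). }
  exists w. split; [exact Hw |].
  intros w' Hw'. apply Huniq. rewrite <- Hw', <- Hu, comp_assoc. split; reflexivity.
Qed.

Lemma split_extension_jointly_epic {K A B : C} (k : Hom K A) (p : Hom A B) (s : Hom B A) :
  is_kernel k p -> p ∘ s = idm B -> jointly_epic k s.
Proof.
  intros Hk Hps T u v Huk Hus.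
  destruct (equalizer_exists u v) as [E [e [Hue Heq]]].
  destruct (Heq K k Huk) as [k' [Hk' _]]. destruct (Heq B s Hus) as [s' [Hs' _]].
  assert (He : is_mono e).
  { intros W a b Hab. destruct (Heq W (e ∘ b)) as [w [_ Hw]].
    { rewrite !comp_assoc, Hue. reflexivity. }
    rewrite (Hw a Hab), (Hw b eq_refl). reflexivity. }
  destruct (HJ Hk Hps He Hk' Hs') as [i [_ Hi]].
  rewrite <- (comp_id_r u), <- (comp_id_r v), <- Hi, !comp_assoc, Hue. reflexivity.
Qed.

Lemma kernel_pair_coequalized {R X Y T : C} (d0 d1 : Hom R X) (h : Hom X Y) (t : Hom X T) :
  is_pullback d0 d1 h h ->
  (forall (Z : C) (z : Hom Z X), is_zero_morphism (h ∘ z) -> is_zero_morphism (t ∘ z)) ->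
  t ∘ d0 = t ∘ d1.
Proof.
  intros [Hc Hpb] Ht.
  destruct (Hpb X (idm X) (idm X) eq_refl) as [dg [[Hdg0 Hdg1] _]].
  destruct (has_kernels_of_pullbacks d0) as [K [k Hk]].
  apply (split_extension_jointly_epic Hk Hdg0).
  - apply zero_morphism_unique; rewrite <- comp_assoc.
    + apply zero_morphism_comp_l, (proj1 Hk).
    + apply Ht. rewrite comp_assoc, <- Hc, <- comp_assoc. apply zero_morphism_comp_l, (proj1 Hk).
  - rewrite <- !comp_assoc, Hdg0, Hdg1. reflexivity.
Qed.

Lemma mono_of_trivial_kernel {X Y : C} (h : Hom X Y) :
  (forall (T : C) (z : Hom T X), is_zero_morphism (h ∘ z) -> is_zero_morphism z) -> is_mono h.
Proof.
  intros Htriv T x y Hxy.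
  destruct (HPb h h) as [R [d0 [d1 Hpb]]].
  assert (Hd : idm X ∘ d0 = idm X ∘ d1).
  { apply (kernel_pair_coequalized Hpb). intros Z z Hz. rewrite comp_id_l. exact (Htriv Z z Hz). }
  rewrite !comp_id_l in Hd.
  destruct (proj2 Hpb T x y Hxy) as [w [[Hw0 Hw1] _]]. rewrite <- Hw0, <- Hw1, Hd. reflexivity.
Qed.

Lemma regular_epi_normal {X Y : C} (e : Hom X Y) : is_regular_epi e -> is_normal_epi e.
Proof.
  intros [W [f [g [Hfg Hcoeq]]]].
  destruct (has_kernels_of_pullbacks e) as [K [k Hk]].
  exists K, k. split; [exact (proj1 Hk) |].
  intros T t Ht. apply Hcoeq.
  destruct (HPb e e) as [R [d0 [d1 Hpb]]].
  assert (Hd : t ∘ d0 = t ∘ d1).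
  { apply (kernel_pair_coequalized Hpb). intros Z z Hz.
    destruct (proj2 Hk Z z Hz) as [u [Hu _]].
    rewrite <- Hu, comp_assoc. apply zero_morphism_comp_r, Ht. }
  destruct (proj2 Hpb W f g Hfg) as [w [[Hw0 Hw1] _]].
  rewrite <- Hw0, <- Hw1, !comp_assoc, Hd. reflexivity.
Qed.

Lemma product_projection_cokernel {P X Y : C} {p1 : Hom P X} {p2 : Hom P Y}
    (Hp : is_product p1 p2) (i2 : Hom Y P) :
  is_zero_morphism (p1 ∘ i2) -> p2 ∘ i2 = idm Y -> is_cokernel p1 i2.
Proof.
  intros Hz Hi2. pose proof (product_injection_kernel Hp Hz Hi2) as Hk.
  destruct (zero_morphism_exists HP X Y) as [z Hz0].
  destruct (product_pairing Hp (idm X) z) as [i1 [Hi1 _]].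
  split; [exact Hz |].
  intros T g Hg. exists (g ∘ i1). split.
  - apply (split_extension_jointly_epic Hk Hi1); rewrite <- !comp_assoc.
    + apply zero_morphism_unique; [apply zero_morphism_comp_l, zero_morphism_comp_l, Hz | exact Hg].
    + rewrite Hi1, comp_id_r. reflexivity.
  - intros h Hh. rewrite <- Hh, <- comp_assoc, Hi1, comp_id_r. reflexivity.
Qed.

Lemma split_normal_mono_complement_mono {B A X K : C}
    (m : Hom B A) (r : Hom A B) (q : Hom A X) (k : Hom K A) :
  r ∘ m = idm B -> is_kernel k r -> is_kernel m q -> is_mono (q ∘ k).
Proof.
  intros Hr Hk Hm. apply mono_of_trivial_kernel. intros T z Hz.
  destruct (proj2 Hm T (k ∘ z)) as [w [Hw _]]. { rewrite comp_assoc. exact Hz. }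
  assert (Hw0 : is_zero_morphism w).
  { rewrite <- (comp_id_l w), <- Hr, <- comp_assoc, Hw, comp_assoc.
    apply zero_morphism_comp_r, (proj1 Hk). }
  apply (zero_morphism_mono_cancel (kernel_mono Hk)). rewrite <- Hw.
  apply zero_morphism_comp_l, Hw0.
Qed.

Lemma cokernel_factors_through_complement {B A X K : C}
    (m : Hom B A) (r : Hom A B) (q : Hom A X) (k : Hom K A) :
  r ∘ m = idm B -> is_kernel k r -> is_zero_morphism (q ∘ m) -> is_mono (q ∘ k) ->
  exists t : Hom A K, (q ∘ k) ∘ t = q.
Proof.
  intros Hr Hk Hqm Hqk.
  destruct (HPb q (q ∘ k)) as [P [p1 [p2 Hpb]]].
  pose proof (pullback_mono Hpb Hqk) as Hp1.
  destruct (proj2 Hpb K k (idm K)) as [k' [[Hk' _] _]]. { rewrite comp_id_r. reflexivity. }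
  destruct (zero_morphism_exists HP B K) as [z Hz].
  destruct (proj2 Hpb B m z) as [m' [[Hm' _] _]].
  { apply zero_morphism_unique; [exact Hqm | apply zero_morphism_comp_l, Hz]. }
  (* The subobject [p1] contains both halves of the split extension (k, m), so it is all of A. *)
  destruct (HJ Hk Hr Hp1 Hk' Hm') as [i [_ Hi]].
  exists (p2 ∘ i). rewrite comp_assoc, <- (proj1 Hpb), <- comp_assoc, Hi. apply comp_id_r.
Qed.

Lemma split_normal_mono_cokernel_split {B A X : C} (m : Hom B A) (q : Hom A X) :
  is_split_mono m -> is_normal_mono m -> is_cokernel q m -> is_split_epi q.
Proof.
  intros [r Hr] [Y [f Hf]] Hq.
  destruct (has_kernels_of_pullbacks r) as [K [k Hk]].
  pose proof (split_normal_mono_complement_mono Hr Hk (normal_mono_kernel_of_cokernel Hf Hq))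
    as Hqk.
  destruct (cokernel_factors_through_complement Hr Hk (proj1 Hq) Hqk) as [t Ht].
  destruct (proj2 Hq K t) as [h [Hh _]].
  { apply (zero_morphism_mono_cancel Hqk). rewrite comp_assoc, Ht. exact (proj1 Hq). }
  exists (k ∘ h). rewrite comp_assoc.
  apply (cokernel_epi Hq). rewrite <- comp_assoc, Hh, Ht, comp_id_l. reflexivity.
Qed.

End PointedProtomodular.

Lemma regular_epi_of_normal {C : Category} (HP : pointed C) {A X : C} (e : Hom A X) :
  is_normal_epi e -> is_regular_epi e.
Proof.
  intros [Y [f Hf]]. destruct (zero_morphism_exists HP Y A) as [z Hz].
  exists Y, f, z. split.
  - apply zero_morphism_unique; [exact (proj1 Hf) | apply zero_morphism_comp_l, Hz].
  - intros T h Hh. apply (proj2 Hf). rewrite Hh. apply zero_morphism_comp_l, Hz.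
Qed.

Lemma normal_epi_split_iff_regular_projective {C : Category} (HD : pointed_protomodular C)
    (Hstab : pullback_stable_regular_epis C) (X : C) :
  (forall (A : C) (e : Hom A X), is_normal_epi e -> is_split_epi e) <->
  (forall (A B : C) (e : Hom B A) (f : Hom X A), is_regular_epi e -> exists g : Hom X B, e ∘ g = f).
Proof.
  destruct HD as [HP [HPb HJ]]. split.
  - intros Hsplit A B e f He. destruct (HPb B X A e f) as [P [a [b Hpb]]].
    destruct (Hsplit P b (regular_epi_normal HP HPb HJ (Hstab P B X A a b e f Hpb He))) as [s Hs].
    exists (a ∘ s). rewrite comp_assoc, (proj1 Hpb), <- comp_assoc, Hs. apply comp_id_r.
  - intros Hproj A e He.
    exact (Hproj X A e (idm X) (regular_epi_of_normal HP He)).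
Qed.

Section Abelian.

Variable C : Category.
Hypothesis HA : abelian C.

Lemma abelian_eq_iff_zero {A T : C} (u v : Hom A T) :
  exists (Y : C) (g : Hom A Y), forall (W : C) (h : Hom W A),
    u ∘ h = v ∘ h <-> is_zero_morphism (g ∘ h).
Proof.
  destruct HA as [_ [HPr [_ [_ [_ [HMn _]]]]]].
  destruct (HPr T T) as [P [p1 [p2 Hp]]].
  destruct (product_pairing Hp (idm T) (idm T)) as [d [Hd1 Hd2]].
  destruct (HMn T P d (mono_of_retraction Hd1)) as [Y [f Hf]].
  destruct (product_pairing Hp u v) as [uv [Huv1 Huv2]].
  exists Y, (f ∘ uv). intros W h. split.
  - intros E. assert (Hdu : uv ∘ h = d ∘ (u ∘ h)).
    { apply (product_hom_ext Hp); rewrite !comp_assoc.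
      - rewrite Huv1, Hd1, comp_id_l. reflexivity.
      - rewrite Huv2, Hd2, comp_id_l. exact (eq_sym E). }
    rewrite <- comp_assoc, Hdu, comp_assoc. apply zero_morphism_comp_r, (proj1 Hf).
  - intros Hz. destruct (proj2 Hf W (uv ∘ h)) as [t [Ht _]]. { rewrite comp_assoc. exact Hz. }
    rewrite <- Huv1, <- Huv2, <- !comp_assoc, <- Ht, !comp_assoc, Hd1, Hd2. reflexivity.
Qed.

Lemma abelian_split_extension_jointly_epic {K A B : C} (k : Hom K A) (p : Hom A B) (s : Hom B A) :
  is_kernel k p -> p ∘ s = idm B -> jointly_epic k s.
Proof.
  intros Hk Hps T u v Huk Hus.
  destruct (abelian_eq_iff_zero u v) as [Y [g Hg]].
  destruct HA as [_ [_ [_ [_ [_ [_ HEn]]]]]].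
  destruct (HEn A B p (epi_of_section Hps)) as [X [f Hf]].
  destruct (proj2 (normal_epi_cokernel_of_kernel Hf Hk) Y g) as [g' [Hg' _]].
  { apply Hg, Huk. }
  assert (Hz : is_zero_morphism g').
  { rewrite <- (comp_id_r g'), <- Hps, comp_assoc, Hg'. apply Hg, Hus. }
  rewrite <- (comp_id_r u), <- (comp_id_r v). apply Hg.
  rewrite comp_id_r, <- Hg'. apply zero_morphism_comp_r, Hz.
Qed.

Lemma abelian_mono_epi_iso {X Y : C} (f : Hom X Y) : is_mono f -> is_epi f -> is_iso f.
Proof.
  intros Hm He. destruct HA as [HP [_ [_ [_ [_ [HMn _]]]]]].
  destruct (HMn X Y f Hm) as [B [g Hg]].
  destruct (zero_morphism_exists HP Y B) as [z Hz].
  assert (g = z) as ->.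
  { apply He, zero_morphism_unique; [exact (proj1 Hg) | apply zero_morphism_comp_r, Hz]. }
  destruct (proj2 Hg Y (idm Y)) as [t [Ht _]]. { apply zero_morphism_comp_r, Hz. }
  exists t. split; [| exact Ht].
  apply Hm. rewrite comp_assoc, Ht, comp_id_l, comp_id_r. reflexivity.
Qed.

Lemma abelian_has_pullbacks : has_pullbacks C.
Proof.
  intros X Y Z f g. destruct HA as [_ [HPr [_ [HK _]]]].
  destruct (HPr X Y) as [P [p1 [p2 Hp]]].
  destruct (abelian_eq_iff_zero (f ∘ p1) (g ∘ p2)) as [W [e He]].
  destruct (HK P W e) as [E [k Hk]].
  exists E, (p1 ∘ k), (p2 ∘ k). split.
  - rewrite !comp_assoc. apply He, (proj1 Hk).
  - intros T x y Hxy. destruct (product_pairing Hp x y) as [u [Hu1 Hu2]].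
    destruct (proj2 Hk T u) as [w [Hw Huniq]].
    { apply He. rewrite <- !comp_assoc, Hu1, Hu2. exact Hxy. }
    exists w. split.
    + rewrite <- !comp_assoc, Hw. split; assumption.
    + intros w' [Hw1 Hw2]. apply Huniq.
      apply (product_hom_ext Hp); rewrite comp_assoc; congruence.
Qed.

Lemma abelian_pointed_protomodular : pointed_protomodular C.
Proof.
  split; [exact (proj1 HA) | split; [exact abelian_has_pullbacks |]].
  intros K A B k p s Hk Hps E e k' s' He Hek Hes.
  apply (abelian_mono_epi_iso He). intros T u v Huv.
  apply (abelian_split_extension_jointly_epic Hk Hps);
    [rewrite <- Hek | rewrite <- Hes]; rewrite !comp_assoc, Huv; reflexivity.
Qed.

End Abelian.

Lemma comp_mono {C : Category} {X Y Z : C} (g : Hom Y Z) (f : Hom X Y) :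
  is_mono g -> is_mono f -> is_mono (g ∘ f).
Proof. intros Hg Hf T a b Hab. apply Hf, Hg. rewrite !comp_assoc. exact Hab. Qed.

Lemma mono_of_comp_mono {C : Category} {X Y Z : C} (g : Hom Y Z) (f : Hom X Y) :
  is_mono (g ∘ f) -> is_mono f.
Proof. intros Hgf T a b Hab. apply Hgf. rewrite <- !comp_assoc, Hab. reflexivity. Qed.

(* [k] is the antidiagonal {(a, -a)} of A + A = A ⊕ A, and [al ∘ k] identifies it with A. *)
Lemma abelian_codiagonal_kernel {C : Category} (HA : abelian C) {A AA : C} {j1 j2 : Hom A AA}
    (Hj : is_coproduct j1 j2) (al : Hom AA A) :
  is_zero_morphism (al ∘ j1) -> al ∘ j2 = idm A ->
  exists (K : C) (k : Hom K AA), is_mono (al ∘ k) /\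
    forall (T : C) (t : Hom AA T), is_zero_morphism (t ∘ k) -> t ∘ j1 = t ∘ j2.
Proof.
  intros Ha1 Ha2. pose proof HA as [_ [_ [_ [HK [_ [_ HEn]]]]]].
  destruct (abelian_pointed_protomodular (abelian_op HA)) as [HP' [HPb' HJ']].
  destruct (coproduct_copairing Hj (idm A) (idm A)) as [nab [Hn1 Hn2]].
  destruct (HK AA A nab) as [K [k Hk]].
  exists K, k. split.
  - intros T w1 w2 Hw. apply (kernel_mono Hk).
    (* Dually, [nab] and [al] are jointly monic. *)
    apply (split_extension_jointly_epic HP' HPb' HJ'
             (proj2 (kernel_op al j1) (coproduct_injection_cokernel Hj Ha1 Ha2)) Hn1).
    + cbn. rewrite !comp_assoc. exact Hw.
    + cbn. apply zero_morphism_unique; rewrite comp_assoc; apply zero_morphism_comp_r, (proj1 Hk).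
  - intros T t Ht.
    destruct (HEn AA A nab (epi_of_section Hn1)) as [Y [f Hf]].
    destruct (proj2 (normal_epi_cokernel_of_kernel Hf Hk) T t Ht) as [t' [Ht' _]].
    rewrite <- Ht', <- !comp_assoc, Hn1, Hn2. reflexivity.
Qed.

Lemma abelian_mono_pushout {C : Category} (HA : abelian C) {A B X : C}
    (m : Hom A B) (f : Hom A X) :
  is_mono m -> exists (P : C) (g : Hom X P) (h : Hom B P), is_mono g /\ g ∘ f = h ∘ m.
Proof.
  intros Hm. pose proof HA as [HP [_ [HCo [_ [HCK [HMn _]]]]]].
  destruct (abelian_pointed_protomodular HA) as [_ [HPb HJ]].
  destruct (HCo A A) as [AA [j1 [j2 Hj]]]. destruct (HCo X B) as [XB [i1 [i2 Hi]]].
  destruct (zero_morphism_exists HP A A) as [zA HzA].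
  destruct (coproduct_copairing Hj zA (idm A)) as [al [Ha1 Ha2]].
  assert (Hal : is_zero_morphism (al ∘ j1)) by (rewrite Ha1; exact HzA).
  destruct (abelian_codiagonal_kernel HA Hj Hal Ha2) as [K [k [Hak Hk]]].
  destruct (coproduct_copairing Hj (i1 ∘ f) (i2 ∘ m)) as [F [HF1 HF2]].
  destruct (zero_morphism_exists HP X B) as [zXB HzXB].
  destruct (coproduct_copairing Hi zXB (idm B)) as [be [Hb1 Hb2]].
  destruct (zero_morphism_exists HP B X) as [zBX _].
  destruct (coproduct_copairing Hi (idm X) zBX) as [rho [Hr1 _]].
  (* [F ∘ k] is the difference of [i1 ∘ f] and [i2 ∘ m]; its cokernel is their pushout. *)
  assert (HbF : be ∘ F = m ∘ al).
  { apply (coproduct_hom_ext Hj); rewrite <- !comp_assoc.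
    - rewrite HF1, Ha1, comp_assoc, Hb1.
      apply zero_morphism_unique; [apply zero_morphism_comp_r, HzXB | apply zero_morphism_comp_l, HzA].
    - rewrite HF2, Ha2, comp_assoc, Hb2, comp_id_l, comp_id_r. reflexivity. }
  assert (HbFk : is_mono (be ∘ (F ∘ k))).
  { rewrite comp_assoc, HbF, <- comp_assoc. apply comp_mono; assumption. }
  destruct (HCK K XB (F ∘ k)) as [P [c Hc]].
  destruct (HMn K XB (F ∘ k) (mono_of_comp_mono HbFk)) as [Y [g Hg]].
  pose proof (normal_mono_kernel_of_cokernel Hg Hc) as HFk.
  exists P, (c ∘ i1), (c ∘ i2). split.
  - apply (mono_of_trivial_kernel HP HPb HJ). intros T z Hz.
    destruct (proj2 HFk T (i1 ∘ z)) as [w [Hw _]]. { rewrite comp_assoc. exact Hz. }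
    apply (zero_morphism_mono_cancel (mono_of_retraction Hr1)).
    rewrite <- Hw. apply zero_morphism_comp_l, (zero_morphism_mono_cancel HbFk).
    rewrite <- comp_assoc, Hw, comp_assoc, Hb1. apply zero_morphism_comp_r, HzXB.
  - rewrite <- !comp_assoc, <- HF1, <- HF2, !comp_assoc. apply Hk.
    rewrite <- comp_assoc. exact (proj1 Hc).
Qed.

Lemma abelian_complete_iff_injective {C : Category} (HA : abelian C) (X : C) :
  complete X <-> injective X.
Proof.
  split.
  - intros Hc A B m f Hm. pose proof HA as [_ [_ [_ [_ [_ [HMn _]]]]]].
    destruct (abelian_mono_pushout HA f Hm) as [P [g [h [Hg Hsq]]]].
    destruct (Hc P g (HMn X P g Hg)) as [r Hr].
    exists (r ∘ h). rewrite <- comp_assoc, <- Hsq, comp_assoc, Hr. apply comp_id_l.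
  - intros Hi A k [B [f Hk]].
    destruct (Hi X A k (idm X) (kernel_mono Hk)) as [r Hr]. exists r. exact Hr.
Qed.

Lemma split_normal_epi_kernel_split {C : Category} (HD : pointed_protomodular (op C))
    {X A B : C} (k : Hom X A) (p : Hom A B) :
  is_split_epi p -> is_normal_epi p -> is_kernel k p -> is_split_mono k.
Proof.
  intros Hp Hn Hk. destruct HD as [HP [HPb HJ]].
  exact (split_normal_mono_cokernel_split HP HPb HJ Hp
           (proj2 (normal_mono_op p) Hn) (proj2 (cokernel_op k p) Hk)).
Qed.

Lemma strong_complete_iff_zero_object {C : Category} (HD : pointed_protomodular (op C)) (X : C) :
  strong_complete X <-> is_zero_object X.
Proof.
  destruct HD as [HP [HPb HJ]]. split.
  - intros Hs. apply zero_object_op.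
    destruct (has_binary_products_of_pullbacks HP HPb X X) as [P [p1 [p2 Hp]]].
    destruct (zero_morphism_exists HP X X) as [z Hz].
    destruct (product_pairing Hp z (idm X)) as [i2 [Hi21 Hi22]].
    apply (zero_of_unique_projection_section HP Hp).
    destruct (Hs P p1) as [r [_ Hr]].
    { exists X, i2. split; [exists p2; exact Hi22 |].
      apply cokernel_op, (product_projection_cokernel HP HPb HJ Hp); [rewrite Hi21 |]; assumption. }
    intros s s' Hs1 Hs1'. rewrite (Hr s Hs1), (Hr s' Hs1'). reflexivity.
  - intros HZ A k _. destruct (proj2 HZ A) as [r Hr]. exists r. split.
    + apply (hom_to_zero_object_eq HZ).
    + intros r' _. apply Hr.
Qed.

Lemma complete_iff_regular_injective {C : Category} (HD : pointed_protomodular (op C))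
    (Hstab : pullback_stable_regular_epis (op C)) (X : C) :
  complete X <-> regular_injective X.
Proof.
  pose proof (normal_epi_split_iff_regular_projective HD Hstab X) as Hiff. split.
  - intros Hc. exact (proj1 Hiff (fun A e He => Hc A e (proj1 (normal_epi_op (C := C) e) He))).
  - intros Hr A k Hk. exact (proj2 Hiff Hr A k (proj2 (normal_epi_op (C := C) k) Hk)).
Qed.

Theorem proposition4p8 :
  (forall C : Category, abelian C ->
     (forall (X A B : C) (k : Hom X A) (p : Hom A B),
        is_split_epi p -> is_normal_epi p -> is_kernel k p -> is_split_mono k) /\
     (forall X : C, proto_complete X) /\
     (forall X : C, complete X <-> injective X) /\
     (forall X : C, strong_complete X <-> is_zero_object X)) /\
  (forall C : Category, semi_abelian (op C) ->
     (forall (X A B : C) (k : Hom X A) (p : Hom A B),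
        is_split_epi p -> is_normal_epi p -> is_kernel k p -> is_split_mono k) /\
     (forall X : C, complete X <-> regular_injective X) /\
     (forall X : C, strong_complete X <-> is_zero_object X)).
Proof.
  split.
  - intros C HA.
    pose proof (abelian_pointed_protomodular (abelian_op HA)) as HD.
    pose proof HA as [_ [_ [_ [_ [_ [_ HEn]]]]]].
    split; [| split; [| split]].
    + intros X A B. apply (split_normal_epi_kernel_split HD).
    + intros X A k [B [p [[s Hs] Hk]]].
      apply (split_normal_epi_kernel_split HD (ex_intro _ s Hs) (HEn A B p (epi_of_section Hs)) Hk).
    + apply (abelian_complete_iff_injective HA).
    + apply (strong_complete_iff_zero_object HD).
  - intros C HS.
    pose proof (semi_abelian_pointed_protomodular HS) as HD.
    destruct HS as [_ [[[_ [_ Hstab]] _] _]].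
    split; [| split].
    + intros X A B. apply (split_normal_epi_kernel_split HD).
    + apply (complete_iff_regular_injective HD Hstab).
    + apply (strong_complete_iff_zero_object HD).
Qed.
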